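(* Assume $p\nmid a$. For all integers $r,s,t$ there exists a constant $C$ (depending on $r,s,t$) such that for every integer $v\ge C$, $$\#\Omega_{v,r,s,t}=1-g+v+(q^{a-1}-1)r+q^{b-1}s+(q-1)t.$$
   Context: Let $p$ be a prime, $q$ a power of $p$, $b\ge1$ an integer, $a=b+1$, $c=a+b$, $N_k=(q^k-1)/(q-1)$, and $g=\frac12\big((q^c-2)(q^{a-1}+q^{b-1}-2)+(q^c-q)\big)$. For integers $v,r,s,t$ define the lattice point set $\Omega_{v,r,s,t}=\{(i,j,k)\in\mathbb{Z}^3:\ -v\le i,\ \ -r\le i+(q^c-1)k<-r+(q^c-1),\ \ -s\le -q^ai+(q^c-1)j<(q^c-1)-s,\ \ -t\le q^{a-1}N_b\,i-q^{b-1}N_c\,j-(q^{a-1}-1)N_c\,k\}$. *)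

From HB Require Import structures.
From mathcomp Require Import all_boot all_order all_algebra.
Set Implicit Arguments. Unset Strict Implicit. Unset Printing Implicit Defensive.
Import Order.TTheory GRing.Theory Num.Theory.
Local Open Scope ring_scope.

(* N_k = (q^k - 1)/(q - 1), as an integer (exact division for q >= 2). *)
Definition Nk (q k : nat) : int := ((q%:Z ^+ k - 1) %/ (q%:Z - 1))%Z.

(* g = ((q^c-2)(q^(a-1)+q^(b-1)-2) + (q^c-q)) / 2, with a = b+1, c = a+b
   (the numerator is always even). *)
Definition genus (q b : nat) : int :=
  let a := b.+1 in let c := (a + b)%N in
  (((q%:Z ^+ c - 2) * (q%:Z ^+ a.-1 + q%:Z ^+ b.-1 - 2) + (q%:Z ^+ c - q%:Z)) %/ 2)%Z.

Definition in_Omega (q b : nat) (v r s t : int) (x : int * int * int) : bool :=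
  let: (i, j, k) := x in
  let a := b.+1 in let c := (a + b)%N in
  let Q : int := q%:Z ^+ c - 1 in
  [&& - v <= i,
      - r <= i + Q * k,
      i + Q * k < - r + Q,
      - s <= - (q%:Z ^+ a) * i + Q * j,
      - (q%:Z ^+ a) * i + Q * j < Q - s &
      - t <= q%:Z ^+ a.-1 * Nk q b * i - q%:Z ^+ b.-1 * Nk q c * j
             - (q%:Z ^+ a.-1 - 1) * Nk q c * k].

Definition has_card (T : eqType) (P : pred T) (m : int) : Prop :=
  exists l : seq T, [/\ uniq l, (forall x, (x \in l) = P x) & (size l)%:Z = m].

From HB Require Import structures.
From mathcomp Require Import all_boot all_order all_algebra.
From mathcomp Require Import ring lra zify.
Import Order.TTheory GRing.Theory Num.Theory.
Local Open Scope ring_scope.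

(* For a given i the two window conditions of Omega force k = k_of i and
   j = j_of i, so Omega is in bijection with the i >= -v such that
   t + ell i >= 0.  Shifting i by Q = q^c - 1 lowers ell by N_c, hence once v
   is large every residue class -v + m (0 <= m < Q) contributes
   (t + ell (-v + m)) div N_c + 1 points.  These floors are summed using
   (q - 1) ell i = -(i + q^(b-1) y + (q^b - 1) x), where x and y run over
   complete residue systems modulo Q, and the fact that the residues of
   t + ell modulo N_c run q - 1 times over a complete system, q^b N_b being a
   unit modulo N_c. *)

Lemma double_sum_nat (n : nat) :
  2 * \sum_(0 <= m < n) m%:Z = n%:Z * (n%:Z - 1).
Proof.
elim: n => [|n IH]; first by rewrite big_geq.
by rewrite big_nat_recr //= mulrDr IH intS; ring.
Qed.

Lemma big_nat_mul_period (V : nmodType) (F : nat -> V) (n d : nat) :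
  (forall m, F (m + n)%N = F m) ->
  \sum_(0 <= m < d * n) F m = (\sum_(0 <= m < n) F m) *+ d.
Proof.
move=> Fper; elim: d => [|d IH]; first by rewrite mul0n big_geq.
rewrite mulSnr (big_cat_nat _ (leq_addr n _)) //= IH mulrSr; congr (_ + _).
rewrite -{1}(add0n (d * n)%N) big_addn addKn; apply: eq_bigr => m _.
by elim: d {IH} => [|d IH]; rewrite ?addn0 // mulSnr addnA Fper.
Qed.

(* Multiplication by a unit modulo [n] permutes the residues. *)
Lemma sum_modz_affine (n : nat) (a u t : int) : (0 < n)%N ->
  (n%:Z %| u * a - 1)%Z ->
  \sum_(0 <= m < n) ((a * m%:Z + t) %% n%:Z)%Z = \sum_(0 <= m < n) m%:Z.
Proof.
move=> n_gt0 ua1; rewrite !big_mkord.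
have nz : n%:Z != 0 by rewrite eqz_nat -lt0n.
have res_lt (x : int) : (`|(x %% n%:Z)%Z| < n)%N.
  by rewrite -ltz_nat gez0_abs ?modz_ge0 ?ltz_pmod ?ltz_nat.
pose h (m : 'I_n) := Ordinal (res_lt (a * (m : nat)%:Z + t)).
have h_inj : injective h.
  move=> i j /(congr1 (fun x : 'I_n => (x : nat)%:Z)) /=.
  rewrite !gez0_abs ?modz_ge0 // => /eqP; rewrite eqz_mod_dvd.
  set d := (i : nat)%:Z - (j : nat)%:Z.
  rewrite (_ : _ - _ = a * d); last by rewrite /d; ring.
  move=> dvd_ad; have : (n%:Z %| d)%Z.
    rewrite (_ : d = u * (a * d) - (u * a - 1) * d); last by ring.
    by rewrite rpredB ?(dvdz_mull _ dvd_ad) ?(dvdz_mulr _ ua1).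
  rewrite /d -eqz_mod_dvd !modz_small ?ltz_nat ?ltn_ord ?andbT //.
  by move=> /eqP [] /ord_inj.
rewrite [RHS](reindex_inj h_inj) /=; apply: eq_bigr => i _.
by rewrite gez0_abs ?modz_ge0.
Qed.

Lemma double_sum_modz_affine (n d : nat) (a u t : int) : (0 < n)%N ->
  (n%:Z %| u * a - 1)%Z ->
  2 * \sum_(0 <= m < d * n) ((a * m%:Z + t) %% n%:Z)%Z
    = d%:Z * (n%:Z * (n%:Z - 1)).
Proof.
move=> n_gt0 ua1; rewrite big_nat_mul_period.
  rewrite (sum_modz_affine _ _ _ t n_gt0 ua1) mulrnAr double_sum_nat.
  by rewrite -mulr_natl natz.
by move=> m; rewrite PoszD mulrDr addrAC addrC modzMDl.
Qed.

Lemma addr_mul_oppdivz (Q x y : int) :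
  x + Q * - ((x + y) %/ Q)%Z = ((x + y) %% Q)%Z - y.
Proof. by have := divz_eq (x + y) Q; lra. Qed.

Lemma window_shiftE (Q x y k : int) : 0 < Q ->
  (- y <= x + Q * k) && (x + Q * k < - y + Q) = (k == - ((x + y) %/ Q)%Z).
Proof.
move=> Q_gt0; have Q_neq0 : Q != 0 by rewrite gt_eqF.
apply/idP/eqP => [/andP [lo hi] | ->].
  have -> : x + y = - k * Q + (x + y + Q * k) by ring.
  rewrite divzMDl // divz_small ?addr0 ?opprK // gez0_abs ?(ltW Q_gt0) //.
  by apply/andP; split; lra.
rewrite addr_mul_oppdivz.
have := modz_ge0 (x + y) Q_neq0; have := ltz_pmod (x + y) Q_gt0.
by move=> ? ?; apply/andP; split; lra.
Qed.

Lemma has_card_graph (A B : eqType) (g : A -> B) (h : B -> A)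
    (P : pred A) (P' : pred B) (m : int) :
  cancel g h -> (forall y, P' y = P (h y) && (y == g (h y))) ->
  has_card P m -> has_card P' m.
Proof.
move=> gK P'E [l [l_uniq lE l_size]]; exists (map g l); split.
- by rewrite (map_inj_uniq (can_inj gK)).
- move=> y; rewrite P'E; apply/mapP/andP => [[x xl ->]|[hy /eqP yE]].
    by rewrite gK -lE xl eqxx.
  by exists (h y); rewrite ?lE.
- by rewrite size_map.
Qed.

Lemma has_card_drift (n : nat) (N v : int) (f : int -> int) :
  (0 < n)%N -> 0 < N ->
  (forall i k, f (i + k * n%:Z) = f i - k * N) ->
  (forall m, (m < n)%N -> 0 <= f (- v + m%:Z)) ->
  has_card [pred i | (- v <= i) && (0 <= f i)]
    (\sum_(0 <= m < n) ((f (- v + m%:Z) %/ N)%Z + 1)).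
Proof.
move=> n_gt0 N_gt0 f_drift f_ge0.
pose cnt (m : nat) := absz ((f (- v + m%:Z) %/ N)%Z + 1)%R.
have cntE m : (m < n)%N -> (cnt m)%:Z = (f (- v + m%:Z) %/ N)%Z + 1.
  by move=> /f_ge0; rewrite -(divz_ge0 _ N_gt0) => ?; rewrite /cnt gez0_abs //; lra.
pose pt (m k : nat) := - v + (m + k * n)%N%:Z.
have f_pt m k : f (pt m k) = f (- v + m%:Z) - k%:Z * N.
  by rewrite /pt PoszD PoszM addrA f_drift.
exists [seq pt m k | m <- iota 0 n, k <- iota 0 (cnt m)]; split.
- apply: allpairs_uniq_dep => [|m _|]; rewrite ?iota_uniq //.
  move=> [m1 k1] [m2 k2] /allpairsPdep [x1 [y1 [m1n _ e1]]].
  move=> /allpairsPdep [x2 [y2 [m2n _ e2]]] /= /addrI /eqP; rewrite eqz_nat.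
  case: e1 e2 => -> _ [-> _]; rewrite !mem_iota /= in m1n m2n *.
  move=> /eqP e; have k12 : k1 = k2 by nia.
  by move: e; rewrite k12 => /addIn ->.
- move=> i /=; apply/allpairsPdep/andP => [[m [k [mn kn ->]]] | [vi fi]].
    rewrite !mem_iota /= in mn kn; rewrite f_pt; split; first by rewrite /pt; lia.
    move: kn; rewrite -ltz_nat cntE // => kn.
    have : k%:Z <= (f (- v + m%:Z) %/ N)%Z by lia.
    by rewrite lez_divRL //; lra.
  pose x := absz (i + v); have iE : i = - v + x%:Z by rewrite /x gez0_abs; lra.
  have mn : (x %% n < n)%N by rewrite ltn_pmod.
  exists (x %% n)%N, (x %/ n)%N; rewrite !mem_iota /= mn.
  have ptE : pt (x %% n)%N (x %/ n)%N = i by rewrite /pt addnC -divn_eq.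
  split => //; rewrite -ltz_nat cntE //.
  have : 0 <= f (pt (x %% n)%N (x %/ n)%N) by rewrite ptE.
  by rewrite f_pt subr_ge0 -lez_divRL //; lia.
- rewrite size_allpairs_dep sumnE big_map -natz natr_sum /index_iota subn0.
  by apply: eq_big_seq => m; rewrite mem_iota size_iota natz => /cntE.
Qed.

Lemma Nk_mul (q n : nat) : (1 < q)%N -> (q%:Z - 1) * Nk q n = q%:Z ^+ n - 1.
Proof.
move=> q_gt1; rewrite /Nk subrX1 mulKz // subr_eq0.
by rewrite -[1]/(1%:Z) eqz_nat; case: q q_gt1 => [|[]].
Qed.

Section Omega.

Variables (q b : nat) (r s : int).
Hypotheses (q_gt1 : (1 < q)%N) (b_gt0 : (0 < b)%N).

Local Notation qz := q%:Z.
Local Notation c := (b.+1 + b)%N.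
Local Notation Nb := (Nk q b).
Local Notation Nc := (Nk q c).

Definition Q : nat := (q ^ c).-1.

Lemma QE : Q%:Z = qz ^+ c - 1.
Proof.
rewrite /Q -subn1 -subzn ?expn_gt0 ?(ltnW q_gt1) //.
by rewrite -natz natrX natz.
Qed.

Lemma Q_gt0 : (0 < Q)%N.
Proof. by rewrite /Q -ltnS prednK ?expn_gt0 ?(ltnW q_gt1) // -(exp1n c) ltn_exp2r. Qed.

Lemma Q_neq0 : Q%:Z != 0.
Proof. by rewrite eqz_nat -lt0n Q_gt0. Qed.

Lemma qz_gt1 : 1 < qz.
Proof. by rewrite -[1]/(1%:Z) ltz_nat. Qed.

Lemma qz1_neq0 : qz - 1 != 0.
Proof. by rewrite subr_eq0 gt_eqF ?qz_gt1. Qed.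

Lemma NbE : (qz - 1) * Nb = qz ^+ b - 1.
Proof. exact: Nk_mul. Qed.

Lemma NcE : (qz - 1) * Nc = Q.
Proof. by rewrite QE Nk_mul. Qed.

Lemma Nc_gt0 : 0 < Nc.
Proof.
have := Q_gt0; rewrite -ltz_nat -NcE pmulr_rgt0 //.
by rewrite subr_gt0 qz_gt1.
Qed.

Lemma expr_c : qz ^+ c = qz * qz ^+ b * qz ^+ b.
Proof. by rewrite exprD exprS. Qed.

Lemma expr_b : qz ^+ b = qz ^+ b.-1 * qz.
Proof. by rewrite -exprSr prednK. Qed.

Definition k_of (i : int) : int := - ((i + r) %/ Q)%Z.
Definition j_of (i : int) : int := - ((- qz ^+ b.+1 * i + s) %/ Q)%Z.

Definition ell (i : int) : int :=
  qz ^+ b * Nb * i - qz ^+ b.-1 * Nc * j_of i - (qz ^+ b - 1) * Nc * k_of i.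

Lemma in_OmegaE v t i j k :
  in_Omega q b v r s t (i, j, k)
  = [&& - v <= i, 0 <= t + ell i & (i, j, k) == (i, j_of i, k_of i)].
Proof.
rewrite /in_Omega /= -QE (addrC Q%:Z (- s)) [X in (- v <= i) && X]andbA.
rewrite [X in (_ <= _ < _) && X]andbA !window_shiftE ?ltz_nat ?Q_gt0 //.
rewrite /ell /k_of /j_of !xpair_eqE eqxx -(lerD2l t (- t)) addrN.
by case: eqP => [->|_]; case: eqP => [->|_]; rewrite /= ?andbF ?andbT.
Qed.

(* The middle terms of the two window conditions of Omega at
   (j, k) = (j_of i, k_of i). *)
Definition x_of (i : int) : int := ((i + r) %% Q)%Z - r.
Definition y_of (i : int) : int := ((- qz ^+ b.+1 * i + s) %% Q)%Z - s.

Lemma ell_eq i :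
  (qz - 1) * ell i = - (i + qz ^+ b.-1 * y_of i + (qz ^+ b - 1) * x_of i).
Proof.
have -> : (qz - 1) * ell i = qz ^+ b * ((qz - 1) * Nb) * i
    - qz ^+ b.-1 * ((qz - 1) * Nc) * j_of i
    - (qz ^+ b - 1) * ((qz - 1) * Nc) * k_of i by rewrite /ell; ring.
rewrite NbE NcE /x_of /y_of -!addr_mul_oppdivz -/(k_of i) -/(j_of i).
by rewrite exprS !expr_b; ring.
Qed.

Lemma x_of_shift (i k : int) : x_of (i + k * Q) = x_of i.
Proof. by rewrite /x_of (addrAC i) (addrC (i + r)) modzMDl. Qed.

Lemma y_of_shift (i k : int) : y_of (i + k * Q) = y_of i.
Proof.
rewrite /y_of (_ : - qz ^+ b.+1 * (i + k * Q) + s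
  = (- qz ^+ b.+1 * k) * Q + (- qz ^+ b.+1 * i + s)) ?modzMDl //.
by ring.
Qed.

Lemma ell_shift (i k : int) : ell (i + k * Q) = ell i - k * Nc.
Proof.
apply: (mulfI qz1_neq0); rewrite [RHS]mulrBr (mulrCA _ k) NcE.
by rewrite !ell_eq x_of_shift y_of_shift; ring.
Qed.

Lemma ell_modNc t i : ((t + ell i) %% Nc)%Z = ((qz ^+ b * Nb * i + t) %% Nc)%Z.
Proof.
rewrite /ell (_ : t + _ = (- qz ^+ b.-1 * j_of i - (qz ^+ b - 1) * k_of i) * Nc
  + (qz ^+ b * Nb * i + t)) ?modzMDl //.
by ring.
Qed.

Lemma double_sum_wrap v (a u y : int) : (Q%:Z %| u * a - 1)%Z ->
  2 * \sum_(0 <= m < Q) (((a * (- v + m%:Z) + y) %% Q)%Z - y)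
    = Q%:Z * (Q%:Z - 1) - 2 * Q%:Z * y.
Proof.
move=> ua1; rewrite sumrB sumr_const_nat subn0 mulrBr -mulr_natr natz.
rewrite (eq_bigr (fun m => ((a * m%:Z + (y - a * v)) %% Q)%Z)) => [|m _].
  have := double_sum_modz_affine Q 1 a u (y - a * v) Q_gt0 ua1.
  by rewrite mul1n => ->; ring.
by congr (_ %% _)%Z; ring.
Qed.

Lemma double_sum_x v :
  2 * \sum_(0 <= m < Q) x_of (- v + m%:Z) = Q%:Z * (Q%:Z - 1) - 2 * Q%:Z * r.
Proof.
rewrite -(@double_sum_wrap v 1 1) ?subrr ?dvdz0 //.
by congr (2 * _); apply: eq_bigr => m _; rewrite mul1r.
Qed.

Lemma double_sum_y v :
  2 * \sum_(0 <= m < Q) y_of (- v + m%:Z) = Q%:Z * (Q%:Z - 1) - 2 * Q%:Z * s.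
Proof.
rewrite -(@double_sum_wrap v (- qz ^+ b.+1) (- qz ^+ b)) //.
by rewrite mulrNN -exprD addnC -QE.
Qed.

Lemma Nb_doubling : Nb * (1 + qz ^+ b) = Nc - qz ^+ b * qz ^+ b.
Proof. by apply: (mulfI qz1_neq0); rewrite mulrA NbE mulrBr NcE QE expr_c; ring. Qed.

(* q^b N_b is invertible modulo N_c, since N_b (1 + q^b) = N_c - q^(2b) and
   q^c = 1 mod N_c. *)
Lemma Nc_dvd_inv :
  (Nc %| - (qz ^+ 2 * qz ^+ b) * (1 + qz ^+ b) * (qz ^+ b * Nb) - 1)%Z.
Proof.
have -> : - (qz ^+ 2 * qz ^+ b) * (1 + qz ^+ b) * (qz ^+ b * Nb) - 1
    = - (qz ^+ 2 * qz ^+ b * qz ^+ b) * Nc + (qz ^+ c + 1) * ((qz - 1) * Nc).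
  have -> : - (qz ^+ 2 * qz ^+ b) * (1 + qz ^+ b) * (qz ^+ b * Nb) - 1
      = - (qz ^+ 2 * qz ^+ b * qz ^+ b) * (Nb * (1 + qz ^+ b)) - 1 by ring.
  by rewrite Nb_doubling NcE QE expr_c; ring.
by rewrite rpredD ?dvdz_mull ?dvdzz.
Qed.

Lemma double_sum_modNc v t :
  2 * \sum_(0 <= m < Q) ((qz ^+ b * Nb * (- v + m%:Z) + t) %% Nc)%Z
    = (qz - 1) * (Nc * (Nc - 1)).
Proof.
pose n := `|Nc|%N; have nE : n%:Z = Nc by rewrite gez0_abs // ltW ?Nc_gt0.
have n_gt0 : (0 < n)%N by rewrite -ltz_nat nE Nc_gt0.
have QnE : Q = ((q - 1) * n)%N.
  by apply/eqP; rewrite -eqz_nat PoszM nE -subzn ?(ltnW q_gt1) // NcE.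
have := double_sum_modz_affine n (q - 1) (qz ^+ b * Nb) _
  (t - qz ^+ b * Nb * v) n_gt0.
rewrite -QnE nE -subzn ?(ltnW q_gt1) // => /(_ _ Nc_dvd_inv) <-.
by congr (2 * _); apply: eq_bigr => m _; congr (_ %% _)%Z; ring.
Qed.

Lemma sum_div_Nc v t :
  Nc * \sum_(0 <= m < Q) (((t + ell (- v + m%:Z)) %/ Nc)%Z + 1)
  = Q%:Z * t + \sum_(0 <= m < Q) ell (- v + m%:Z)
    - \sum_(0 <= m < Q) ((qz ^+ b * Nb * (- v + m%:Z) + t) %% Nc)%Z + Q%:Z * Nc.
Proof.
have summandE (m : nat) : Nc * (((t + ell (- v + m%:Z)) %/ Nc)%Z + 1)
    = t + ell (- v + m%:Z) - ((qz ^+ b * Nb * (- v + m%:Z) + t) %% Nc)%Z + Nc.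
  rewrite -ell_modNc; move: (t + _) => x.
  by have := divz_eq x Nc; lra.
rewrite mulr_sumr (eq_bigr _ (fun m _ => summandE m)).
rewrite big_split sumrB big_split /= !sumr_const_nat subn0.
by rewrite -[t *+ Q]mulr_natr -[Nc *+ Q]mulr_natr natz; ring.
Qed.

Lemma double_sum_ell v :
  2 * ((qz - 1) * \sum_(0 <= m < Q) ell (- v + m%:Z))
  = 2 * Q%:Z * v - (qz ^+ b.-1 + qz ^+ b) * (Q%:Z * (Q%:Z - 1))
    + 2 * qz ^+ b.-1 * Q%:Z * s + 2 * (qz ^+ b - 1) * Q%:Z * r.
Proof.
rewrite mulr_sumr (eq_bigr _ (fun m _ => ell_eq _)) sumrN.
rewrite big_split big_split big_split /= -!mulr_sumr sumr_const_nat subn0.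
rewrite -[- v *+ Q]mulr_natr (natz Q).
set Sm := \sum_(0 <= m < Q) m%:Z.
set SX := \sum_(0 <= m < Q) x_of (- v + m%:Z).
set SY := \sum_(0 <= m < Q) y_of (- v + m%:Z).
have -> : 2 * - (- v * Q%:Z + Sm + qz ^+ b.-1 * SY + (qz ^+ b - 1) * SX)
    = 2 * v * Q%:Z - 2 * Sm - qz ^+ b.-1 * (2 * SY) - (qz ^+ b - 1) * (2 * SX).
  by ring.
by rewrite double_sum_nat double_sum_x double_sum_y; ring.
Qed.

Lemma double_sum_count v t :
  2 * \sum_(0 <= m < Q) (((t + ell (- v + m%:Z)) %/ Nc)%Z + 1)
  = 2 * (qz - 1) * t + 2 * v - (qz ^+ b.-1 + qz ^+ b) * (Q%:Z - 1)
    + 2 * qz ^+ b.-1 * s + 2 * (qz ^+ b - 1) * r - (qz - 1) * (Nc - 1)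
    + 2 * Q%:Z.
Proof.
apply: (mulfI Q_neq0).
set S := \sum_(0 <= m < Q) _.
set SF := \sum_(0 <= m < Q) ell (- v + m%:Z).
set SM := \sum_(0 <= m < Q) ((qz ^+ b * Nb * (- v + m%:Z) + t) %% Nc)%Z.
have -> : Q%:Z * (2 * S) = 2 * (qz - 1) * (Nc * S) by rewrite -NcE; ring.
rewrite sum_div_Nc -/SF -/SM.
have -> : 2 * (qz - 1) * (Q%:Z * t + SF - SM + Q%:Z * Nc)
    = 2 * (qz - 1) * Q%:Z * t + 2 * ((qz - 1) * SF) - (qz - 1) * (2 * SM)
      + 2 * Q%:Z * ((qz - 1) * Nc) by ring.
by rewrite double_sum_ell double_sum_modNc -NcE; ring.
Qed.

Lemma genus_eq (w : int) :
  2 * w = (Q%:Z - 1) * (qz ^+ b + qz ^+ b.-1 - 2) + (Q%:Z + 1 - qz) ->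
  genus q b = w.
Proof.
rewrite /genus /= (_ : qz ^+ c = Q%:Z + 1); last by rewrite QE; ring.
by rewrite (_ : Q%:Z + 1 - 2 = Q%:Z - 1); [move=> <-; rewrite mulKz | ring].
Qed.

Lemma sum_countE v t :
  \sum_(0 <= m < Q) (((t + ell (- v + m%:Z)) %/ Nc)%Z + 1)
  = 1 - genus q b + v + (qz ^+ b - 1) * r + qz ^+ b.-1 * s + (qz - 1) * t.
Proof.
set S := \sum_(0 <= m < Q) _.
rewrite (@genus_eq (1 + v + (qz ^+ b - 1) * r + qz ^+ b.-1 * s + (qz - 1) * t - S)).
  by ring.
have Nc1E : (qz - 1) * (Nc - 1) = Q%:Z - (qz - 1) by rewrite mulrBr NcE mulr1.
by rewrite mulrBr double_sum_count Nc1E; ring.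
Qed.

Definition v_min (t : int) : int :=
  Q%:Z + qz ^+ b.-1 * (Q%:Z - s) + (qz ^+ b - 1) * (Q%:Z - r) - (qz - 1) * t.

Lemma ell_ge0 v t m : (m < Q)%N -> v_min t <= v -> 0 <= t + ell (- v + m%:Z).
Proof.
rewrite /v_min => mQ v_ge; have qz1_gt0 : 0 < qz - 1 by rewrite subr_gt0 qz_gt1.
rewrite -(pmulr_rge0 _ qz1_gt0) mulrDr ell_eq.
have Qz_gt0 : 0 < Q%:Z by rewrite ltz_nat Q_gt0.
have x_lt : x_of (- v + m%:Z) < Q%:Z - r.
  by rewrite /x_of; have := ltz_pmod (- v + m%:Z + r) Qz_gt0; lra.
have y_lt : y_of (- v + m%:Z) < Q%:Z - s.
  by rewrite /y_of; have := ltz_pmod (- qz ^+ b.+1 * (- v + m%:Z) + s) Qz_gt0; lra.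
have qb1_ge0 : 0 <= qz ^+ b.-1 by rewrite exprn_ge0 // ltW // (lt_trans ltr01 qz_gt1).
have qb_ge1 : 0 <= qz ^+ b - 1 by rewrite subr_ge0 exprn_ege1 // ltW // qz_gt1.
have := ler_wpM2l qb1_ge0 (ltW y_lt); have := ler_wpM2l qb_ge1 (ltW x_lt).
by rewrite -ltz_nat in mQ; lra.
Qed.

End Omega.

Theorem proposition4 (p e b : nat) :
  prime p -> (0 < e)%N -> (0 < b)%N -> ~~ (p %| b.+1)%N ->
  let q := (p ^ e)%N in
  forall r s t : int, exists C : int, forall v : int, C <= v ->
    has_card (in_Omega q b v r s t)
      (1 - genus q b + v + (q%:Z ^+ b - 1) * r + q%:Z ^+ b.-1 * s
         + (q%:Z - 1) * t).
Proof.
move=> p_prime e_gt0 b_gt0 _ q r s t.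
have q_gt1 : (1 < q)%N by rewrite -{1}(expn0 p) ltn_exp2l ?prime_gt1.
exists (v_min q b r s t) => v v_ge.
rewrite -sum_countE //.
pose f i := t + ell q b r s i.
apply: (@has_card_graph _ _ (fun i => (i, j_of q b s i, k_of q b r i))
          (fun y => y.1.1) [pred i | (- v <= i) && (0 <= f i)]) => //.
  by move=> [[i j] k]; rewrite in_OmegaE //= andbA.
apply: (@has_card_drift (Q q b) (Nk q (b.+1 + b)) v f) => [|||m mQ].
- exact: Q_gt0.
- exact: Nc_gt0.
- by move=> i k; rewrite /f ell_shift // addrA.
- exact: ell_ge0.
Qed.
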